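(* Let $\gamma>0$ and let $K(x,y)=e^{-\gamma|x-y|^2}$ be the one-dimensional Gaussian kernel on $\mathbb{R}$. There exists a finite dataset $X\subset\mathbb{R}$ such that for every $D\in\mathbb{N}$ and every map $\phi=(\phi_1,\dots,\phi_D):X\to\mathbb{R}^D$ satisfying $\sum_{j=1}^D\phi_j(x)\phi_j(y)=K(x,y)$ for all $x,y\in X$, there exists a component $\phi_j$, $j\in[D]$, that is not monotonic on $X$ (i.e. $\phi_j$ is neither nondecreasing nor nonincreasing as a function on the ordered set $X$). *)

From Stdlib Require Import Reals List.
Open Scope R_scope.

Definition gauss_kernel (gamma x y : R) : R := exp (- gamma * (Rabs (x - y)) ^ 2).

(* sum_{j=0}^{D-1} f j  (components indexed 0..D-1 instead of 1..D) *)
Fixpoint sum_lt (D : nat) (f : nat -> R) : R :=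
  match D with
  | O => 0
  | S d => sum_lt d f + f d
  end.

Definition nondecreasing_on (X : list R) (f : R -> R) : Prop :=
  forall x y, In x X -> In y X -> x <= y -> f x <= f y.
Definition nonincreasing_on (X : list R) (f : R -> R) : Prop :=
  forall x y, In x X -> In y X -> x <= y -> f y <= f x.
Definition monotonic_on (X : list R) (f : R -> R) : Prop :=
  nondecreasing_on X f \/ nonincreasing_on X f.

(* If every feature [phi j] were monotonic on [0 < d < 2d], each product
   [(phi j d - phi j 0) * (phi j d - phi j (2d))] would be nonpositive.  Summing
   over [j] and expanding with the factorisation of the kernel turns this into
   [K(d,d) - K(0,d) - K(d,2d) + K(0,2d) <= 0], i.e. [1 - 2 q + q^4 <= 0] with
   [q = exp (-gamma d^2)].  Once [gamma d^2 >= 1] we have [q < 1/2], so the left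
   side is positive: a contradiction. *)

From Stdlib Require Import Reals List Lra Psatz Classical.
Open Scope R_scope.

Lemma sum_lt_ext (D : nat) (f g : nat -> R) :
  (forall j, f j = g j) -> sum_lt D f = sum_lt D g.
Proof. intros Hfg; induction D as [|D IH]; simpl; [reflexivity | now rewrite IH, Hfg]. Qed.

Lemma sum_lt_plus (D : nat) (f g : nat -> R) :
  sum_lt D (fun j => f j + g j) = sum_lt D f + sum_lt D g.
Proof. induction D as [|D IH]; simpl; [lra | rewrite IH; lra]. Qed.

Lemma sum_lt_minus (D : nat) (f g : nat -> R) :
  sum_lt D (fun j => f j - g j) = sum_lt D f - sum_lt D g.
Proof. induction D as [|D IH]; simpl; [lra | rewrite IH; lra]. Qed.

Lemma sum_lt_nonpos (D : nat) (f : nat -> R) :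
  (forall j, (j < D)%nat -> f j <= 0) -> sum_lt D f <= 0.
Proof.
  induction D as [|D IH]; simpl; intros Hf; [lra|].
  assert (sum_lt D f <= 0) by (apply IH; intros; apply Hf; lia).
  assert (f D <= 0) by (apply Hf; lia).
  lra.
Qed.

Lemma monotonic_on_middle (X : list R) (f : R -> R) (a b c : R) :
  monotonic_on X f -> In a X -> In b X -> In c X -> a <= b -> b <= c ->
  (f b - f a) * (f b - f c) <= 0.
Proof.
  intros [Hf | Hf] Ha Hb Hc Hab Hbc.
  - assert (f a <= f b) by (apply Hf; auto).
    assert (f b <= f c) by (apply Hf; auto).
    nra.
  - assert (f b <= f a) by (apply Hf; auto).
    assert (f c <= f b) by (apply Hf; auto).
    nra.
Qed.

Lemma feature_sum_middle (K : R -> R -> R) (X : list R) (D : nat)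
    (phi : nat -> R -> R) (a b c : R) :
  (forall x y, In x X -> In y X ->
     sum_lt D (fun j => phi j x * phi j y) = K x y) ->
  In a X -> In b X -> In c X ->
  sum_lt D (fun j => (phi j b - phi j a) * (phi j b - phi j c)) =
  K b b - K a b - K b c + K a c.
Proof.
  intros HK Ha Hb Hc.
  rewrite (sum_lt_ext D _ (fun j => phi j b * phi j b - phi j a * phi j b
                                    - phi j b * phi j c + phi j a * phi j c))
    by (intros; ring).
  rewrite sum_lt_plus, !sum_lt_minus.
  now rewrite (HK b b), (HK a b), (HK b c), (HK a c).
Qed.

Lemma monotonic_features_middle (K : R -> R -> R) (X : list R) (D : nat)
    (phi : nat -> R -> R) (a b c : R) :
  (forall x y, In x X -> In y X ->
     sum_lt D (fun j => phi j x * phi j y) = K x y) ->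
  (forall j, (j < D)%nat -> monotonic_on X (phi j)) ->
  In a X -> In b X -> In c X -> a <= b -> b <= c ->
  K b b - K a b - K b c + K a c <= 0.
Proof.
  intros HK Hmono Ha Hb Hc Hab Hbc.
  rewrite <- (feature_sum_middle K X D phi a b c) by assumption.
  apply sum_lt_nonpos; intros j Hj.
  exact (monotonic_on_middle X (phi j) a b c (Hmono j Hj) Ha Hb Hc Hab Hbc).
Qed.

Lemma gauss_kernel_sqr (gamma x y : R) :
  gauss_kernel gamma x y = exp (- gamma * (x - y) ^ 2).
Proof. unfold gauss_kernel; now rewrite pow2_abs. Qed.

Lemma exp_opp_lt_half (t : R) : 1 <= t -> exp (- t) < / 2.
Proof.
  intros Ht.
  assert (He : 1 + 1 < exp 1) by (apply exp_ineq1; lra).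
  assert (Hle : exp (- t) <= / exp 1).
  { rewrite <- exp_Ropp.
    destruct (Rle_lt_or_eq_dec 1 t Ht) as [Hlt | <-].
    - left; apply exp_increasing; lra.
    - right; reflexivity. }
  assert (/ exp 1 < / 2) by (apply Rinv_lt_contravar; [apply Rmult_lt_0_compat |]; lra).
  lra.
Qed.

Lemma gauss_kernel_middle_pos (gamma d : R) :
  1 <= gamma * d ^ 2 ->
  0 < gauss_kernel gamma d d - gauss_kernel gamma 0 d
      - gauss_kernel gamma d (2 * d) + gauss_kernel gamma 0 (2 * d).
Proof.
  intros Hd.
  rewrite !gauss_kernel_sqr.
  replace ((d - d) ^ 2) with 0 by ring.
  replace ((d - 2 * d) ^ 2) with (d ^ 2) by ring.
  replace ((0 - d) ^ 2) with (d ^ 2) by ring.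
  rewrite Rmult_0_r, exp_0.
  assert (exp (- gamma * d ^ 2) < / 2).
  { replace (- gamma * d ^ 2) with (- (gamma * d ^ 2)) by ring.
    now apply exp_opp_lt_half. }
  assert (0 < exp (- gamma * (0 - 2 * d) ^ 2)) by apply exp_pos.
  lra.
Qed.

Lemma exists_sqr_scale_ge1 (gamma : R) :
  0 < gamma -> exists d, 0 <= d /\ 1 <= gamma * d ^ 2.
Proof.
  intros Hg; exists (1 + / gamma).
  assert (0 < / gamma) by (apply Rinv_0_lt_compat; lra).
  assert (gamma * (1 + / gamma) = gamma + 1) by (field; lra).
  split; nra.
Qed.

Theorem theorem2 (gamma : R) (hgamma : 0 < gamma) :
  exists X : list R,
    forall (D : nat) (phi : nat -> R -> R),
      (forall x y, In x X -> In y X ->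
         sum_lt D (fun j => phi j x * phi j y) = gauss_kernel gamma x y) ->
      exists j, (j < D)%nat /\ ~ monotonic_on X (phi j).
Proof.
  destruct (exists_sqr_scale_ge1 gamma hgamma) as [d [Hd0 Hd]].
  exists (0 :: d :: 2 * d :: nil).
  intros D phi HK.
  apply not_all_not_ex; intros Hall.
  assert (Hmono : forall j, (j < D)%nat -> monotonic_on (0 :: d :: 2 * d :: nil) (phi j)).
  { intros j Hj; apply NNPP; intros Hn; exact (Hall j (conj Hj Hn)). }
  apply (Rlt_not_le _ _ (gauss_kernel_middle_pos gamma d Hd)).
  apply (monotonic_features_middle _ _ D phi 0 d (2 * d) HK Hmono); simpl; auto; lra.
Qed.
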